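(* Let $\sigma$ be a connected non-crossing partition and let $\tau=1[\rho]$ for some non-crossing partition $\rho$. If $\sigma$ and $\tau$ are nc-equivalent, then $1[\sigma]$ and $\tau1=1[\rho]1$ are nc-equivalent.
   Context: Set partitions are written in canonical sequential form (restricted growth words). Pattern containment means having a subsequence order-isomorphic to the pattern; a partition is non-crossing if it avoids $1212$. Bracket notation: in a word built from letters and bracketed partitions, $[\sigma]$ stands for $\sigma+r$ (add $r$ to every letter), where $r$ is the number of distinct symbols appearing before it; so $1[\rho]$ is $1$ followed by $\rho+1$, and $1[\rho]1$ appends a final $1$. $\alpha[\beta]$ is $\alpha$ followed by $\beta$ shifted by the number of blocks of $\alpha$; a partition is connected if it cannot be written as $\alpha[\beta]$ with $\alpha,\beta$ nonempty. Patterns $\alpha,\beta$ are nc-equivalent if for every $n\ge0$ the number of partitions of $[n]$ avoiding $1212$ and $\alpha$ equals the number avoiding $1212$ and $\beta$. *)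

(* Set partitions as restricted growth words (letters >= 1). *)
From mathcomp Require Import all_boot.
Set Implicit Arguments. Unset Strict Implicit. Unset Printing Implicit Defensive.

Fixpoint rgw_aux (m : nat) (s : seq nat) : bool :=
  if s is x :: s' then (0 < x <= m.+1) && rgw_aux (maxn m x) s' else true.

Definition rgw (w : seq nat) : bool := rgw_aux 0 w.

(* number of blocks (= number of distinct letters, for an rgw) *)
Definition nblocks (w : seq nat) : nat := foldr maxn 0 w.

Definition shift (r : nat) (s : seq nat) : seq nat := map (addn r) s.

Definition oiso (u v : seq nat) : bool :=
  (size u == size v) &&
  all (fun i => all (fun j =>
        (nth 0 u i < nth 0 u j) == (nth 0 v i < nth 0 v j))
      (iota 0 (size u))) (iota 0 (size u)).

Fixpoint subseqs (w : seq nat) : seq (seq nat) :=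
  if w is x :: w' then [seq x :: t | t <- subseqs w'] ++ subseqs w'
  else [:: [::]].

Definition contains (w p : seq nat) : bool := has (fun s => oiso s p) (subseqs w).

Definition noncrossing (w : seq nat) : bool :=
  rgw w && ~~ contains w [:: 1; 2; 1; 2].

Definition bracket (a b : seq nat) : seq nat := a ++ shift (nblocks a) b.

Definition connected (s : seq nat) : Prop :=
  ~ exists a b : seq nat,
      [/\ rgw a, rgw b, a != [::], b != [::] & s = bracket a b].

Fixpoint words (k m : nat) : seq (seq nat) :=
  if k is k'.+1 then flatten [seq [seq x :: w | w <- words k' m] | x <- iota 1 m]
  else [:: [::]].

Definition nc_av (n : nat) (alpha : seq nat) : nat :=
  count (fun w => noncrossing w && ~~ contains w alpha) (words n n).

Definition nc_equiv (alpha beta : seq nat) : Prop :=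
  forall n : nat, nc_av n alpha = nc_av n beta.

(* A nonempty non-crossing partition w factors uniquely in two ways:
   - at the LAST occurrence of 1:  w = (g 1)[p]                (join_last g p);
   - at the second occurrence of 1:  w = 1[g] followed by p, where g lies
     between the first two 1s and the block 1 of p is merged into the block 1
     of w                                                       (join_first g p).
   In both cases g and p range over all non-crossing partitions with
   |g| + |p| = |w| - 1.  Containment of the two patterns splits along these
   factorizations: w = (g 1)[p] contains tau1 iff g contains tau or p contains
   tau1, and (sigma being connected, hence ending with 1) w = 1[g]p contains
   1[sigma] iff g contains sigma or p contains 1[sigma].  Hence the avoidance
   counts a_n of 1[sigma] and b_n of tau1 obey the same convolution recurrence
   x_(n+1) = sum_m c_m x_(n-m) with c_m the common avoidance count of sigma
   and tau, and a_0 = b_0 = 1, so a = b. *)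

From mathcomp Require Import all_boot zify.
Set Implicit Arguments. Unset Strict Implicit. Unset Printing Implicit Defensive.

(** Order-isomorphism and pattern containment *)

Lemma mem_subseqs w s : (s \in subseqs w) = subseq s w.
Proof.
elim: w s => [|y w IH] [|x s] //=; rewrite mem_cat IH; first by rewrite sub0seq orbT.
have -> : (x :: s \in [seq y :: t | t <- subseqs w]) = (x == y) && (s \in subseqs w).
  case: (x =P y) => [->|ne] /=; last by apply/mapP => -[t _ [] ].
  by rewrite (mem_map (fun a b => @congr1 _ _ behead (y :: a) (y :: b))).
rewrite IH; case: (x =P y) => [->|] //=.
by case H: (subseq s w) => //=; apply/negP => /cons_subseq; rewrite H.
Qed.

Lemma containsP w p : reflect (exists2 s, subseq s w & oiso s p) (contains w p).
Proof.
by apply: (iffP hasP) => -[s]; rewrite ?mem_subseqs => H1 H2; exists s; rewrite ?mem_subseqs.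
Qed.

Lemma oisoP u v : reflect (size u = size v /\ forall i j, i < size u -> j < size u ->
   (nth 0 u i < nth 0 u j) = (nth 0 v i < nth 0 v j)) (oiso u v).
Proof.
rewrite /oiso; case: eqP => Hs /=; last by right => -[].
apply: (iffP allP) => [H|[_ H] i].
- split=> // i j Hi Hj; have := H i; rewrite mem_iota /= => /(_ Hi) /allP /(_ j).
  by rewrite mem_iota /= => /(_ Hj) /eqP.
- by rewrite mem_iota /= => Hi; apply/allP => j; rewrite mem_iota /= => Hj; rewrite H.
Qed.

Lemma oiso_nth u v i j : oiso u v -> i < size u -> j < size u ->
   (nth 0 u i < nth 0 u j) = (nth 0 v i < nth 0 v j).
Proof. by move/oisoP => [_ H]; apply: H. Qed.

Lemma oiso_size u v : oiso u v -> size u = size v.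
Proof. by move/oisoP => []. Qed.

Lemma oiso_map f g u v : {mono f : x y / x < y} -> {mono g : x y / x < y} ->
  oiso (map f u) (map g v) = oiso u v.
Proof.
move=> mf mg; apply/oisoP/oisoP; rewrite !size_map => -[Hs H]; split=> // i j Hi Hj.
- by have := H i j Hi Hj; rewrite !(nth_map 0) -?Hs // mf mg.
- by rewrite !(nth_map 0) -?Hs // mf mg H.
Qed.

Lemma oiso_mapl f u v : {mono f : x y / x < y} -> oiso (map f u) v = oiso u v.
Proof. by move=> mf; rewrite -(map_id v) oiso_map // map_id. Qed.

Lemma oiso_mapr f u v : {mono f : x y / x < y} -> oiso u (map f v) = oiso u v.
Proof. by move=> mf; rewrite -(map_id u) oiso_map // map_id. Qed.

Lemma oiso_cons x y u v : oiso (x :: u) (y :: v) =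
  oiso u v && all (fun i => ((x < nth 0 u i) == (y < nth 0 v i)) &&
                            ((nth 0 u i < x) == (nth 0 v i < y))) (iota 0 (size u)).
Proof.
apply/oisoP/andP => [[/= [Hs] H]|[/oisoP [Hs H] /allP H2]].
- split; first by apply/oisoP; split=> // i j Hi Hj; apply: (H i.+1 j.+1).
  apply/allP => i; rewrite mem_iota add0n => /= Hi.
  by rewrite (H 0 i.+1 isT Hi) (H i.+1 0 Hi isT) !eqxx.
- split; first by rewrite /= Hs.
  move=> [|i] [|j] //=; rewrite ?ltnS => Hi Hj; [by rewrite !ltnn| | |exact: H].
  + by have /andP[/eqP -> _] := H2 j ltac:(by rewrite mem_iota).
  + by have /andP[_ /eqP ->] := H2 i ltac:(by rewrite mem_iota).
Qed.

Lemma oiso_rcons x y u v : size u = size v -> oiso (rcons u x) (rcons v y) =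
  oiso u v && all (fun i => ((x < nth 0 u i) == (y < nth 0 v i)) &&
                            ((nth 0 u i < x) == (nth 0 v i < y))) (iota 0 (size u)).
Proof.
move=> Hs; apply/oisoP/andP => [[_ H]|[/oisoP [_ H] /allP H2]].
- rewrite size_rcons in H; split.
    apply/oisoP; split=> // i j Hi Hj.
    by have := H i j; rewrite !nth_rcons -Hs Hi Hj; apply; exact: ltnW.
  apply/allP => i; rewrite mem_iota /= add0n => Hi.
  have E1 := H (size u) i (ltnSn _) (ltnW Hi); have E2 := H i (size u) (ltnW Hi) (ltnSn _).
  by rewrite !nth_rcons -Hs Hi ltnn eqxx in E1 E2; rewrite E1 E2 !eqxx.
- split; first by rewrite !size_rcons Hs.
  rewrite size_rcons => i j Hi Hj.
  have Ci : i < size u \/ i = size u by lia.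
  have Cj : j < size u \/ j = size u by lia.
  case: Ci => [Hi'|->]; case: Cj => [Hj'|->]; rewrite !nth_rcons -?Hs ?ltnn ?eqxx ?Hi' ?Hj' //.
  + by rewrite H.
  + by have /andP[_ /eqP ->] := H2 i ltac:(by rewrite mem_iota).
  + by have /andP[/eqP -> _] := H2 j ltac:(by rewrite mem_iota).
Qed.

Lemma oiso_min_head x y u v : (forall i, i < size v -> y < nth 0 v i) ->
  oiso (x :: u) (y :: v) = oiso u v && all (fun i => x < nth 0 u i) (iota 0 (size u)).
Proof.
move=> Hv; rewrite oiso_cons; case Huv: (oiso u v) => //=.
have Hs := oiso_size Huv.
apply: eq_in_all => i; rewrite mem_iota /= add0n => Hi.
rewrite Hv -?Hs //; have := Hv i; rewrite -Hs => /(_ Hi) Hy.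
rewrite (_ : (nth 0 v i < y) = false); last by apply/negbTE; rewrite -leqNgt ltnW.
by case: (ltnP x (nth 0 u i)) => H //=; apply/eqP/negbTE; rewrite -leqNgt ltnW.
Qed.

Lemma oiso_rcons_head u v : oiso u v -> 0 < size u ->
  oiso (rcons u (nth 0 u 0)) (rcons v (nth 0 v 0)).
Proof.
move=> H Hs; rewrite oiso_rcons ?H ?(oiso_size H) //=.
apply/allP => i; rewrite mem_iota /= add0n -(oiso_size H) => Hi.
by rewrite (oiso_nth H Hs Hi) (oiso_nth H Hi Hs) !eqxx.
Qed.

Lemma oiso_head_last s q : oiso s q -> 0 < size q ->
  nth 0 q 0 = nth 0 q (size q).-1 -> nth 0 s 0 = nth 0 s (size s).-1.
Proof.
move=> H Hq E; have Hs := oiso_size H.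
have H1 : 0 < size s by rewrite Hs.
have H2 : (size s).-1 < size s by rewrite prednK.
have := oiso_nth H H1 H2; have := oiso_nth H H2 H1.
rewrite Hs E ltnn => /negbT E1 /negbT E2; lia.
Qed.

(** Crossings *)

Lemma oiso1212P s :
  reflect (exists a b, a < b /\ s = [:: a; b; a; b]) (oiso s [:: 1; 2; 1; 2]).
Proof.
apply: (iffP idP).
- move=> H; have Hs := oiso_size H; move: s Hs H => [|a [|b [|c [|d [|? ?]]]]] // _ H.
  have := oiso_nth H (i:=0) (j:=1) isT isT; have := oiso_nth H (i:=0) (j:=2) isT isT.
  have := oiso_nth H (i:=2) (j:=0) isT isT; have := oiso_nth H (i:=1) (j:=3) isT isT.
  have := oiso_nth H (i:=3) (j:=1) isT isT.
  move=> /= /negbT E1 /negbT E2 /negbT E3 /negbT E4 E5.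
  by exists a, b; split=> //; repeat f_equal; lia.
- move=> [a [b [ab ->]]]; apply/oisoP; split=> //.
  by move=> [|[|[|[|i]]]] [|[|[|[|j]]]] //= _ _; apply/idP/idP; lia.
Qed.

Definition crossing (w : seq nat) : Prop :=
  exists a b, a < b /\ subseq [:: a; b; a; b] w.

Lemma ncP w : noncrossing w <-> rgw w /\ ~ crossing w.
Proof.
rewrite /noncrossing; split.
- move/andP=> [H1 /negP H2]; split=> // [[a [b [ab Hs]]]]; apply: H2.
  by apply/containsP; exists [:: a; b; a; b] => //; apply/oiso1212P; exists a, b.
- move=> [H1 H2]; rewrite H1 /=; apply/negP => /containsP [s Hs /oiso1212P [a [b [ab E]]]].
  by apply: H2; exists a, b; rewrite -E.
Qed.

Lemma nc_rgw w : noncrossing w -> rgw w.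
Proof. by case/ncP. Qed.

Lemma subseq_catP (s u v : seq nat) : subseq s (u ++ v) ->
  exists s1 s2, [/\ s = s1 ++ s2, subseq s1 u & subseq s2 v].
Proof.
move/subseqP => [m Hm ->]; exists (mask (take (size u) m) u), (mask (drop (size u) m) v).
split; [|exact: mask_subseq..].
by rewrite -mask_cat ?cat_take_drop //; apply: size_takel; rewrite Hm size_cat leq_addr.
Qed.

Lemma subseq_map_inv (f : nat -> nat) s w : subseq s (map f w) ->
  exists2 s', s = map f s' & subseq s' w.
Proof. by move/subseqP => [m Hm ->]; exists (mask m w); rewrite ?map_mask ?mask_subseq. Qed.

Lemma subseq_rcons2 (s g : seq nat) y z : subseq (rcons s y) (rcons g z) ->
  subseq s g /\ (y != z -> subseq (rcons s y) g).
Proof.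
rewrite -(cats1 g) => /subseq_catP [s1 [[|a [|b s2]] [E H1 H2]]];
  last by move: H2 => /=; case: ifP.
- rewrite cats0 in E; rewrite -E in H1; split=> //.
  exact: subseq_trans (subseq_rcons s y) H1.
- move: H2; rewrite sub1seq inE => /eqP Ea; subst a.
  by move: E; rewrite cats1 => /rcons_inj [-> ->]; rewrite eqxx.
Qed.

Lemma subseq_tl (x y : nat) t w : subseq (x :: t) (y :: w) -> subseq t w.
Proof. by rewrite /=; case: eqP => _ // /cons_subseq. Qed.

Lemma cross_split (a b : nat) (A B : seq nat) : subseq [:: a; b; a; b] (A ++ B) ->
  (forall x, x \in A -> x \in B -> False) ->
  subseq [:: a; b; a; b] A \/ subseq [:: a; b; a; b] B.
Proof.
move=> /subseq_catP [s1 [s2 [E H1 H2]]] D.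
have inA x : x \in s1 -> x \in A by apply: mem_subseq.
have inB x : x \in s2 -> x \in B by apply: mem_subseq.
move: s1 E H1 inA => [|x1 [|x2 [|x3 [|x4 [|x5 s1]]]]] //= E H1 inA.
- by right; rewrite E.
- case: E => E1 E; rewrite -E1 in inA; rewrite -E in inB.
  by exfalso; apply: (D a); [apply: inA|apply: inB]; rewrite !inE eqxx ?orbT.
- case: E => E1 E2 E; rewrite -E1 -E2 in inA; rewrite -E in inB.
  by exfalso; apply: (D a); [apply: inA|apply: inB]; rewrite !inE eqxx ?orbT.
- case: E => E1 E2 E3 E; rewrite -E1 -E2 -E3 in inA; rewrite -E in inB.
  by exfalso; apply: (D b); [apply: inA|apply: inB]; rewrite !inE eqxx ?orbT.
- by move: H1; case: E => <- <- <- <- _ H1; left.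
Qed.

Lemma mono_injn (f : nat -> nat) : {mono f : x y / x < y} -> injective f.
Proof.
move=> mf x y E; have := mf x y; have := mf y x.
by rewrite E ltnn => /esym /negbT H1 /esym /negbT H2; lia.
Qed.

Lemma cross_map_inv (f : nat -> nat) w : {mono f : x y / x < y} ->
  crossing (map f w) -> crossing w.
Proof.
move=> mf [a [b [ab /subseq_map_inv [[|a' [|b' [|c' [|d' [|? ?]]]]] //= [Ea Eb Ec Ed] H]]]].
have Ha : a' = c' by apply: (mono_injn mf); rewrite -Ea -Ec.
have Hb : b' = d' by apply: (mono_injn mf); rewrite -Eb -Ed.
exists a', b'; split; first by rewrite -(mf a' b') -Ea -Eb.
by rewrite -Ha -Hb in H.
Qed.

Lemma cross_map (f : nat -> nat) w : {mono f : x y / x < y} ->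
  crossing w -> crossing (map f w).
Proof.
move=> mf [a [b [ab H]]]; exists (f a), (f b); split; first by rewrite (mf a b).
exact: (map_subseq f H).
Qed.

Lemma cross_sub u w : subseq u w -> crossing u -> crossing w.
Proof. by move=> H [a [b [ab H2]]]; exists a, b; split=> //; exact: subseq_trans H2 H. Qed.

Lemma cross_c1c (c : nat) (u v : seq nat) : 1 < c -> c \in u -> c \in v ->
  crossing (1 :: u ++ 1 :: v).
Proof.
move=> c1 cu cv; exists 1, c; split=> //=.
rewrite (_ : [:: c; 1; c] = [:: c] ++ [:: 1; c]) //.
by apply: cat_subseq; rewrite /= ?eqxx sub1seq.
Qed.

(** Restricted growth words *)

Lemma rgw_cat m s t : rgw_aux m (s ++ t) = rgw_aux m s && rgw_aux (foldl maxn m s) t.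
Proof. by elim: s m => //= x s IH m; rewrite IH andbA. Qed.

Lemma rgw_bound m s : rgw_aux m s -> all (fun x => 0 < x <= m + size s) s.
Proof.
elim: s m => //= x s IH m /andP [/andP [H1 H2] H3]; rewrite H1 /=.
apply/andP; split; first lia.
by apply/allP => y /(allP (IH _ H3)) /andP [H4 H5]; rewrite H4 /=; lia.
Qed.

Lemma rgw_pos m s x : rgw_aux m s -> x \in s -> 0 < x.
Proof. by move/rgw_bound/allP => H /H /andP []. Qed.

Lemma rgw_all_pos p : rgw p -> all (fun x => 0 < x) p.
Proof. by move=> Rp; apply/allP => x; apply: rgw_pos Rp. Qed.

Lemma rgw_head x w : rgw (x :: w) -> x = 1.
Proof. by rewrite /rgw /= => /andP [/andP [H1 H2] _]; lia. Qed.

Lemma foldl_maxnE m s : foldl maxn m s = maxn m (nblocks s).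
Proof. by elim: s m => [|x s IH] m /=; rewrite ?maxn0 // IH maxnA. Qed.

Lemma nblocksE s : nblocks s = foldl maxn 0 s.
Proof. by rewrite foldl_maxnE max0n. Qed.

Lemma leq_nblocks s x : x \in s -> x <= nblocks s.
Proof.
elim: s => //= y s IH; rewrite inE => /orP [/eqP ->|/IH H]; first exact: leq_maxl.
exact: leq_trans H (leq_maxr _ _).
Qed.

Lemma nblocks_pred s : nblocks (map predn s) = predn (nblocks s).
Proof. by elim: s => //= x s ->; lia. Qed.

(* Every letter up to the running maximum either was already available (<= m)
   or occurs in the word: restricted growth words have no gaps. *)
Lemma rgw_mem m u c : rgw_aux m u -> 0 < c <= foldl maxn m u -> c <= m \/ c \in u.
Proof.
elim: u m => [|x u IH] m /=; first by move=> _ /andP [_ ->]; left.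
move=> /andP [/andP [H1 H2] H3] Hc.
case: (IH _ H3 Hc) => [Hc2|Hc2]; last by right; rewrite inE Hc2 orbT.
case: (leqP x m) => Hxm; first by left; move: Hc2; rewrite (maxn_idPl Hxm).
move: Hc2; rewrite (maxn_idPr (ltnW Hxm)) leq_eqVlt => /orP [/eqP->|]; last by left; lia.
by right; rewrite inE eqxx.
Qed.

Lemma shift_mono k : {mono addn k : x y / x < y}.
Proof. by move=> x y; rewrite ltn_add2l. Qed.

Lemma rgw_shift m k p : all (fun x => 0 < x) p -> rgw_aux (m + k) (shift k p) = rgw_aux m p.
Proof.
elim: p m => //= x p IH m /andP [Hx Hp].
by rewrite (addnC k x) -addn_maxl IH // Hx /=; congr andb; apply/idP/idP; lia.
Qed.

Lemma rgw_shift0 k p : rgw p -> rgw_aux k (shift k p) = true.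
Proof. by move=> Rp; have := rgw_shift 0 k (rgw_all_pos Rp); rewrite add0n => ->. Qed.

Lemma foldl_shift m k s : foldl maxn (m + k) (shift k s) = foldl maxn m s + k.
Proof. by elim: s m => //= x s IH m; rewrite (addnC k x) -addn_maxl IH. Qed.

(* lift1 k keeps the letter 1 and raises every other letter by k; it is used
   to merge the first block of a word into an enclosing block 1. *)
Definition lift1 (k x : nat) : nat := if x <= 1 then x else x + k.

Lemma lift1_mono k : {mono lift1 k : x y / x < y}.
Proof. by move=> x y; rewrite /lift1; do 2 case: ifP => ?; apply/idP/idP; lia. Qed.

Lemma rgw_lift m k p : 0 < m -> rgw_aux (m + k) (map (lift1 k) p) = rgw_aux m p.
Proof.
elim: p m => //= x p IH m Hm; rewrite /lift1; case: ifP => Hx.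
- case: x Hx => [|[|x]] //= _.
  by rewrite (maxn_idPl Hm) (maxn_idPl (_ : 1 <= m + k)) ?IH //; lia.
- by rewrite -addn_maxl IH; [congr andb; apply/idP/idP|]; lia.
Qed.

Lemma rgw_aux1 p : rgw p -> rgw_aux 1 p.
Proof. by case: p => //= x p' /[dup] /rgw_head -> /=; rewrite /rgw /=. Qed.

(** Counting through a unique factorization *)

Lemma uniq_flatten_map (T U : eqType) (F : T -> seq U) s : uniq s ->
  {in s, forall y, uniq (F y)} ->
  (forall y1 y2 x, y1 \in s -> y2 \in s -> x \in F y1 -> x \in F y2 -> y1 = y2) ->
  uniq (flatten (map F s)).
Proof.
elim: s => //= y s IH /andP [Hy Us] UF D.
rewrite cat_uniq UF ?inE ?eqxx //= IH //; first last.
- by move=> y1 y2 x H1 H2; apply: D; rewrite inE ?H1 ?H2 orbT.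
- by move=> y' Hy'; apply: UF; rewrite inE Hy' orbT.
rewrite andbT; apply/hasPn => x /flattenP [t /mapP [y' Hy' ->] Hx]; apply/negP => Hx'.
have E := D y y' x (mem_head _ _) ltac:(by rewrite inE Hy' orbT) Hx' Hx.
by move: Hy; rewrite E Hy'.
Qed.

Lemma mem_words k m w : (w \in words k m) = (size w == k) && all (fun x => 0 < x <= m) w.
Proof.
elim: k w => [|k IH] [|x w] //=.
  by apply/negP => /flattenP [s /mapP [y _ ->] /mapP [v _]].
rewrite eqSS; apply/flattenP/idP.
- move=> [s /mapP [y Hy ->] /mapP [v Hv [-> ->]]].
  move: Hv; rewrite IH => /andP [/eqP -> ->]; rewrite eqxx andbT /=.
  by move: Hy; rewrite mem_iota; lia.
- move=> /andP [Hs /andP [Hx Hw]]; exists [seq x :: v | v <- words k m].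
    by apply/mapP; exists x => //; rewrite mem_iota; lia.
  by apply/mapP; exists w => //; rewrite IH Hw andbT.
Qed.

Lemma uniq_words k m : uniq (words k m).
Proof.
elim: k => //= k IH; apply: uniq_flatten_map; first exact: iota_uniq.
- by move=> y _; rewrite map_inj_uniq // => a b [].
- by move=> y1 y2 x _ _ /mapP [v _ ->] /mapP [v' _ [->]].
Qed.

Definition nc_words (k : nat) : seq (seq nat) := filter noncrossing (words k k).

Lemma mem_nc_words k w : (w \in nc_words k) = noncrossing w && (size w == k).
Proof.
rewrite mem_filter mem_words; case Hn: (noncrossing w) => //=.
case: eqP => //= Hs; apply/allP => x Hx.
by have := allP (rgw_bound (nc_rgw Hn)) x Hx; lia.
Qed.

Lemma uniq_nc_words k : uniq (nc_words k).
Proof. exact/filter_uniq/uniq_words. Qed.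

Lemma nc_avE k a : nc_av k a = count (fun w => ~~ contains w a) (nc_words k).
Proof. by rewrite /nc_av /nc_words count_filter; apply: eq_count => w /=; rewrite andbC. Qed.

Lemma sumn_count_mul (T : Type) (b : pred T) (L : seq T) c :
  sumn [seq b g * c | g <- L] = count b L * c.
Proof. by elim: L => //= x L ->; rewrite mulnDl. Qed.

Section Factorization.

Variable J : seq nat -> seq nat -> seq nat.
Hypothesis J_nc : forall g p, noncrossing g -> noncrossing p -> noncrossing (J g p).
Hypothesis J_size : forall g p, size (J g p) = (size g + size p).+1.
Hypothesis J_surj : forall w, noncrossing w -> w != [::] ->
  exists g p, [/\ noncrossing g, noncrossing p & w = J g p].
Hypothesis J_inj : forall g p g' p', noncrossing g -> noncrossing p ->
  noncrossing g' -> noncrossing p' -> J g p = J g' p' -> g = g' /\ p = p'.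

Definition joined (n : nat) : seq (seq nat) :=
  flatten [seq [seq J g p | g <- nc_words m, p <- nc_words (n - m)] | m <- iota 0 n.+1].

Lemma uniq_joined n : uniq (joined n).
Proof.
apply: uniq_flatten_map; first exact: iota_uniq.
- move=> m _; apply: allpairs_uniq; try exact: uniq_nc_words.
  move=> [g p] [g' p'] /allpairsP [[a b] /= [Ha Hb [-> ->]]].
  move=> /allpairsP [[a' b'] /= [Ha' Hb' [-> ->]]] E.
  move: Ha Hb Ha' Hb'; rewrite !mem_nc_words => /andP [Ha _] /andP [Hb _].
  by move=> /andP [Ha' _] /andP [Hb' _]; have [-> ->] := J_inj Ha Hb Ha' Hb' E.
- move=> m1 m2 x _ _ /allpairsP [[a b] [Ha Hb ->]] /allpairsP [[a' b'] [Ha' Hb' E]] /=.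
  move: Ha Hb Ha' Hb'; rewrite !mem_nc_words => /andP [Ha /eqP <-] /andP [Hb _].
  by move=> /andP [Ha' /eqP <-] /andP [Hb' _]; have [-> _] := J_inj Ha Hb Ha' Hb' E.
Qed.

Lemma mem_joined n w : (w \in joined n) = (w \in nc_words n.+1).
Proof.
apply/flattenP/idP.
- move=> [t /mapP [m Hm ->] /allpairsP [[g p] [Hg Hp ->]]] /=.
  move: Hg Hp Hm; rewrite !mem_nc_words mem_iota => /andP [Ng /eqP Sg] /andP [Np /eqP Sp] Hm.
  by rewrite J_nc //= J_size Sg Sp; apply/eqP; lia.
- rewrite mem_nc_words => /andP [Nw /eqP Sw].
  have [g [p [Ng Np Ew]]] : exists g p, [/\ noncrossing g, noncrossing p & w = J g p].
    by apply: J_surj => //; apply/eqP => E; rewrite E in Sw.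
  have Hs : size g + size p = n by move: Sw; rewrite Ew J_size => -[].
  exists [seq J g0 p0 | g0 <- nc_words (size g), p0 <- nc_words (n - size g)].
    by apply/mapP; exists (size g) => //; rewrite mem_iota; lia.
  by apply/allpairsP; exists (g, p); rewrite !mem_nc_words Ng Np Ew /=; split=> //; apply/eqP; lia.
Qed.

Lemma count_nc_words_joined (P : pred (seq nat)) n : count P (nc_words n.+1) =
  sumn [seq sumn [seq count (fun p => P (J g p)) (nc_words (n - m)) | g <- nc_words m]
       | m <- iota 0 n.+1].
Proof.
have Hperm : perm_eq (nc_words n.+1) (joined n).
  by apply: uniq_perm; [exact: uniq_nc_words|exact: uniq_joined|move=> w; rewrite mem_joined].
rewrite (permP Hperm) /joined count_flatten -map_comp.
congr sumn; apply: eq_map => m /=; rewrite count_flatten -map_comp.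
by congr sumn; apply: eq_map => g /=; rewrite count_map.
Qed.

Variables head pat : seq nat.
Hypothesis J_contains : forall g p, noncrossing g -> noncrossing p ->
  contains (J g p) pat = contains g head || contains p pat.

Lemma nc_av_convolution n :
  nc_av n.+1 pat = sumn [seq nc_av m head * nc_av (n - m) pat | m <- iota 0 n.+1].
Proof.
rewrite nc_avE count_nc_words_joined; congr sumn; apply: eq_map => m /=.
rewrite !nc_avE -sumn_count_mul; congr sumn; apply/eq_in_map => g.
rewrite mem_nc_words => /andP [Ng _].
transitivity (count (fun p => ~~ contains g head && ~~ contains p pat) (nc_words (n - m))).
  by apply: eq_in_count => p; rewrite mem_nc_words => /andP [Np _]; rewrite J_contains // negb_or.
by case: (contains g head) => /=; [elim: (nc_words (n - m))|rewrite mul1n].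
Qed.

End Factorization.

Lemma convolution_unique (c a b : nat -> nat) : a 0 = b 0 ->
  (forall n, a n.+1 = sumn [seq c m * a (n - m) | m <- iota 0 n.+1]) ->
  (forall n, b n.+1 = sumn [seq c m * b (n - m) | m <- iota 0 n.+1]) ->
  forall n, a n = b n.
Proof.
move=> E0 Ea Eb n; elim: n {-2}n (leqnn n) => [|n IH] [|k] //= Hk.
rewrite Ea Eb; congr sumn; apply/eq_in_map => m; rewrite mem_iota => Hm.
by rewrite IH //; lia.
Qed.

(** Factorization at the last occurrence of 1: w = (g 1)[p] *)

Definition join_last (g p : seq nat) : seq nat := bracket (rcons g 1) p.

Lemma rgw_rcons1 g : rgw g -> rgw (rcons g 1).
Proof. by rewrite /rgw -cats1 rgw_cat => ->. Qed.

Lemma join_last_letters g p x : rgw p -> x \in shift (nblocks (rcons g 1)) p ->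
  nblocks (rcons g 1) < x.
Proof. by move=> Rp /mapP [y /(rgw_pos Rp) Hy ->]; lia. Qed.

Lemma join_last_nc g p : noncrossing g -> noncrossing p -> noncrossing (join_last g p).
Proof.
move=> /ncP [Rg Cg] /ncP [Rp Cp]; apply/ncP; set K := nblocks (rcons g 1); split.
  by rewrite /join_last /bracket /rgw rgw_cat -nblocksE -/K rgw_shift0 // andbT; exact: rgw_rcons1.
move=> [a [b [ab H]]].
have disj x : x \in rcons g 1 -> x \in shift K p -> False.
  by move=> /leq_nblocks Hx /(join_last_letters Rp); rewrite -/K; lia.
case: (cross_split H disj) => H'.
- have a0 : 0 < a by apply: (rgw_pos (rgw_rcons1 Rg)); apply: (mem_subseq H'); rewrite inE eqxx.
  have [_ H2] := subseq_rcons2 (s := [:: a; b; a]) (y := b) H'.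
  by apply: Cg; exists a, b; split=> //; apply: H2; apply/eqP; lia.
- by apply: Cp; apply: (cross_map_inv (shift_mono K)); exists a, b.
Qed.

Lemma join_last_size g p : size (join_last g p) = (size g + size p).+1.
Proof. by rewrite /join_last /bracket size_cat size_rcons size_map. Qed.

Lemma split_last1 w : 1 \in w -> exists g v, w = rcons g 1 ++ v /\ 1 \notin v.
Proof.
elim: w => //= x w IH; rewrite inE; case H1: (1 \in w).
- by case: (IH H1) => g [v [-> Hv]] _; exists (x :: g), v.
- by move=> /orP [/eqP <-|] //; exists [::], w; rewrite H1.
Qed.

(* In a non-crossing partition, the letters after the last 1 are new letters:
   a letter c <> 1 used both before and after that 1 would cross the block 1. *)
Lemma nc_after_last1 g v c : noncrossing (rcons g 1 ++ v) -> 1 \notin v ->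
  c \in v -> nblocks (rcons g 1) < c.
Proof.
move=> /ncP [Rw Cw] Hv Hc; rewrite ltnNge; apply/negP => HcK.
move: (Rw); rewrite /rgw rgw_cat => /andP [Rg1 _].
have c0 : 0 < c by apply: (rgw_pos Rw); rewrite mem_cat Hc orbT.
have cn1 : c != 1 by apply: contraNneq Hv => <-.
have c1 : 1 < c by lia.
have Hcg : c \in g.
  have := @rgw_mem 0 (rcons g 1) c Rg1; rewrite -nblocksE c0 HcK => /(_ isT) [|]; first lia.
  by rewrite mem_rcons inE gtn_eqF.
case: g Rw Rg1 Cw Hcg {HcK} => // y g' Rw Rg1 Cw; rewrite (rgw_head Rg1) inE gtn_eqF //= => Hcg.
rewrite (rgw_head Rg1) rcons_cons cat_cons cat_rcons in Cw.
exact: Cw (cross_c1c c1 Hcg Hc).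
Qed.

Lemma join_last_surj w : noncrossing w -> w != [::] ->
  exists g p, [/\ noncrossing g, noncrossing p & w = join_last g p].
Proof.
move=> Nw Hne; have [Rw Cw] := (ncP w).1 Nw.
have H1 : 1 \in w by case: w Rw Hne {Nw Cw} => // x w' /rgw_head -> _; rewrite inE eqxx.
have [g [v [Ew Hv]]] := split_last1 H1; set K := nblocks (rcons g 1).
have Vbig c : c \in v -> K < c by move=> Hc; apply: nc_after_last1 Hv Hc; rewrite -Ew.
pose p := map (subn^~ K) v.
have Ev : shift K p = v.
  by rewrite /shift /p -map_comp map_id_in // => c /Vbig Hc /=; rewrite subnKC // ltnW.
have Pp : all (fun x => 0 < x) p by apply/allP => x /mapP [c /Vbig Hc ->]; rewrite subn_gt0.
move: (Rw); rewrite Ew /rgw rgw_cat -nblocksE -/K => /andP [Rg1 Rv].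
exists g, p; split; last by rewrite /join_last /bracket -/K Ev.
- apply/ncP; split; first by move: Rg1; rewrite /rgw -cats1 rgw_cat => /andP [].
  move=> Cg; apply: Cw; apply: cross_sub Cg; rewrite Ew.
  exact: subseq_trans (subseq_rcons g 1) (prefix_subseq _ _).
- apply/ncP; split; first by rewrite /rgw -(rgw_shift 0 K Pp) add0n Ev.
  move=> Cp; apply: Cw; rewrite Ew; apply: cross_sub (suffix_subseq _ _) _.
  by rewrite -Ev; exact: cross_map (shift_mono K) Cp.
Qed.

Lemma last1_uniq (g v g' v' : seq nat) : rcons g 1 ++ v = rcons g' 1 ++ v' ->
  1 \notin v -> 1 \notin v' -> g = g' /\ v = v'.
Proof.
move=> E Hv Hv'.
have E2 : rev v ++ 1 :: rev g = rev v' ++ 1 :: rev g' by rewrite -!rev_rcons -!rev_cat E.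
have Hs : size v = size v'.
  have := congr1 (index 1) E2; rewrite !index_cat !mem_rev (negbTE Hv) (negbTE Hv') /=.
  by rewrite !size_rev !addn0.
move/eqP: E2; rewrite eqseq_cat ?size_rev // => /andP [/eqP Ev /eqP [/(congr1 rev)]].
by rewrite !revK => ->; split=> //; rewrite -(revK v) Ev revK.
Qed.

Lemma join_last_inj g p g' p' : rgw p -> rgw p' -> join_last g p = join_last g' p' ->
  g = g' /\ p = p'.
Proof.
move=> Rp Rp' E.
have notin1 h q : rgw q -> 1 \notin shift (nblocks (rcons h 1)) q.
  move=> Rq; apply/negP => /(join_last_letters Rq).
  by rewrite ltnNge leq_nblocks // mem_rcons mem_head.
have [Eg Ev] := last1_uniq E (notin1 g p Rp) (notin1 g' p' Rp').
by subst g'; split => //; exact: (inj_map (@addnI (nblocks (rcons g 1))) Ev).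
Qed.

(* The patterns of the theorem start with a 1 followed by letters above 1. *)
Definition above1 (u : seq nat) : Prop := forall i, i < size u -> 1 < nth 0 u i.

Lemma above1_shift rho : rgw rho -> above1 (shift 1 rho).
Proof.
move=> Rr i; rewrite size_map => Hi; rewrite (nth_map 0) //.
by have := rgw_pos Rr (mem_nth 0 Hi); rewrite add1n ltnS.
Qed.

Lemma oiso_head1 x t u : 0 < x -> above1 u -> oiso (x :: t) (1 :: u) ->
  oiso (1 :: t) (1 :: u).
Proof.
move=> x0 Hu; rewrite !oiso_min_head // => /andP [-> /allP Hx] /=.
by apply/allP => i /Hx; lia.
Qed.

(* An occurrence of the pattern (1 :: u) 1 in (g 1)[p] lies entirely in p, or
   is an occurrence of 1 :: u in g completed by the last 1: its first and last
   letters are equal, and no letter of g equals a letter of the shifted p. *)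
Lemma join_last_contains_split g p u : rgw p ->
  contains (join_last g p) (rcons (1 :: u) 1) ->
  contains g (1 :: u) || contains p (rcons (1 :: u) 1).
Proof.
move=> Rp /containsP [s Hs Ho]; set K := nblocks (rcons g 1).
have HL : nth 0 s 0 = nth 0 s (size s).-1.
  by apply: (oiso_head_last Ho); rewrite size_rcons //= nth_rcons ltnn eqxx.
move: Hs; rewrite /join_last /bracket -/K => /subseq_catP [[|x1 s1] [s2 [E H1 H2]]].
- rewrite /= in E; subst s2; have [s' Es Hs'] := subseq_map_inv H2.
  apply/orP; right; apply/containsP; exists s' => //.
  by move: Ho; rewrite Es oiso_mapl //; exact: shift_mono.
case/lastP: s2 E H2 => [|s2 z] E H2.
- rewrite cats0 in E; subst s; rewrite lastI in H1 Ho.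
  have [Hb _] := subseq_rcons2 H1.
  apply/orP; left; apply/containsP; exists (belast x1 s1) => //.
  have Hsz : size (belast x1 s1) = size (1 :: u).
    by have := oiso_size Ho; rewrite !size_rcons size_belast => -[].
  by move: Ho; rewrite oiso_rcons // => /andP [].
- exfalso; have Hx1 : x1 <= K by apply: leq_nblocks; apply: (mem_subseq H1); rewrite inE eqxx.
  have Hz : K < z.
    by apply: (join_last_letters Rp); apply: (mem_subseq H2); rewrite mem_rcons mem_head.
  by move: HL; rewrite nth_last E -rcons_cat last_rcons /= => Exz; lia.
Qed.

Lemma join_last_contains g p u : rgw g -> rgw p -> above1 u ->
  contains (join_last g p) (rcons (1 :: u) 1) =
  contains g (1 :: u) || contains p (rcons (1 :: u) 1).
Proof.
move=> Rg Rp Hu; apply/idP/idP; first exact: join_last_contains_split.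
case/orP=> /containsP [s Hs Ho]; apply/containsP.
- case: s Hs Ho => [|x t] Hs Ho; first by have := oiso_size Ho.
  case: g Rg Hs => [|y g'] Rg Hs //; have Ey := rgw_head Rg; subst y.
  have x0 : 0 < x by apply: (rgw_pos Rg); apply: (mem_subseq Hs); rewrite inE eqxx.
  exists (rcons (1 :: t) 1); last exact: (oiso_rcons_head (oiso_head1 x0 Hu Ho)).
  apply: subseq_trans (prefix_subseq _ _); rewrite /= -!cats1 cat_subseq //.
  exact: subseq_tl Hs.
- exists (shift (nblocks (rcons g 1)) s); last by rewrite oiso_mapl //; exact: shift_mono.
  by apply: subseq_trans (suffix_subseq _ _); exact: map_subseq.
Qed.

(** Factorization at the second 1: w = 1[g] p, the block 1 of p merged in *)

Definition join_first (g p : seq nat) : seq nat :=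
  1 :: shift 1 g ++ map (lift1 (nblocks g)) p.

Lemma join_first_letters_g g x : rgw g -> x \in shift 1 g -> 2 <= x <= (nblocks g).+1.
Proof. by move=> Rg /mapP [y Hy ->]; have := rgw_pos Rg Hy; have := leq_nblocks Hy; lia. Qed.

Lemma join_first_letters_p g p x : rgw p -> x \in map (lift1 (nblocks g)) p ->
  x = 1 \/ (nblocks g).+2 <= x.
Proof.
by move=> Rp /mapP [y Hy ->]; have := rgw_pos Rp Hy; rewrite /lift1; case: ifP => ? ?; lia.
Qed.

Lemma join_first_disj g p x : rgw g -> rgw p ->
  x \in shift 1 g -> x \in map (lift1 (nblocks g)) p -> False.
Proof.
move=> Rg Rp /(join_first_letters_g Rg) H1 /(join_first_letters_p Rp) [] H2; lia.
Qed.

Lemma rgw_join_first g p : rgw g -> rgw p -> rgw (join_first g p).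
Proof.
move=> Rg Rp; rewrite /rgw /join_first /= rgw_cat.
have := rgw_shift 0 1 (rgw_all_pos Rg); rewrite add0n => ->; rewrite (Rg : rgw_aux 0 g) /=.
have := foldl_shift 0 1 g; rewrite add0n => ->; rewrite -nblocksE addnC.
by rewrite rgw_lift // rgw_aux1.
Qed.

Lemma join_first_nc g p : noncrossing g -> noncrossing p -> noncrossing (join_first g p).
Proof.
move=> /ncP [Rg Cg] /ncP [Rp Cp]; apply/ncP; split; first exact: rgw_join_first.
move=> [a [b [ab H]]]; move: H; rewrite /join_first [subseq _ _]/=.
have Cp' c : subseq [:: 1; c; 1; c] (map (lift1 (nblocks g)) p) -> 1 < c -> False.
  by move=> H c1; apply: Cp; apply: (cross_map_inv (lift1_mono (nblocks g))); exists 1, c.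
case: (a =P 1) => [Ea|Ea]; last first.
  move=> H; case: (cross_split H (fun x => @join_first_disj g p x Rg Rp)) => H'.
  + by apply: Cg; apply: (cross_map_inv (shift_mono 1)); exists a, b.
  + by apply: Cp; apply: (cross_map_inv (lift1_mono (nblocks g))); exists a, b.
subst a => /subseq_catP [t2 [t3 [E H2 H3]]].
have G2 x : x \in t2 -> 2 <= x.
  by move=> Hx; have := join_first_letters_g Rg (mem_subseq H2 Hx); lia.
case: t2 E H2 G2 => [|x2 [|y2 [|z2 [|? ?]]]] //= E H2 G2.
- subst t3; case: p Rp Cp Cp' H3 => [|y p''] Rp _ Cp' H3 //.
  have Ey := rgw_head Rp; subst y.
  have L1 : lift1 (nblocks g) 1 = 1 by [].
  move: H3 => /=; rewrite L1 (gtn_eqF ab) => H3.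
  by apply: (Cp' b) => //=; rewrite L1 eqxx.
- case: E => Eb Et; subst b t3; apply: (@join_first_disj g p x2 Rg Rp).
    by apply: (mem_subseq H2); rewrite inE eqxx.
  by apply: (mem_subseq H3); rewrite !inE eqxx orbT.
- by case: E => _ Ey2 _; have := G2 y2; rewrite !inE eqxx orbT -Ey2 => /(_ isT).
- by case: E => _ Ey2 _ _; have := G2 y2; rewrite !inE eqxx orbT -Ey2 => /(_ isT).
Qed.

Lemma join_first_size g p : size (join_first g p) = (size g + size p).+1.
Proof. by rewrite /join_first /= size_cat !size_map. Qed.

Definition starts1 (P : seq nat) : Prop := P = [::] \/ exists r, P = 1 :: r.

Lemma split_first1 (w : seq nat) : exists G P, [/\ w = G ++ P, 1 \notin G & starts1 P].
Proof.
elim: w => [|x w [G [P [E HG HP]]]]; first by exists [::], [::]; split=> //; left.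
case: (x =P 1) => [->|Hx]; first by exists [::], (1 :: w); split=> //; right; exists w.
exists (x :: G), P; split=> //; first by rewrite E.
by rewrite inE negb_or HG andbT; apply/eqP => /esym.
Qed.

Lemma nc_after_first_block G P c : noncrossing (1 :: G ++ P) -> 1 \notin G -> starts1 P ->
  c \in P -> c = 1 \/ foldl maxn 1 G < c.
Proof.
move=> /ncP [Rw Cw] HG HP Hc.
have c0 : 0 < c by apply: (rgw_pos Rw); rewrite inE mem_cat Hc !orbT.
case: (c =P 1) => [|/eqP c1]; [by left|right]; rewrite ltnNge; apply/negP => HcM.
have R1G : rgw_aux 0 (1 :: G) by move: Rw; rewrite /rgw -cat_cons rgw_cat => /andP [].
have := @rgw_mem 0 (1 :: G) c R1G; rewrite /= c0 HcM => /(_ isT) [|]; first lia.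
rewrite inE (negbTE c1) /= => HcG.
case: HP => [EP|[r EP]]; subst P; first by [].
move: Hc; rewrite inE (negbTE c1) /= => Hcr.
have c2 : 1 < c by lia.
exact: Cw (cross_c1c c2 HcG Hcr).
Qed.

Lemma join_first_surj w : noncrossing w -> w != [::] ->
  exists g p, [/\ noncrossing g, noncrossing p & w = join_first g p].
Proof.
case: w => // x w' Nw _; have [Rw Cw] := (ncP _).1 Nw.
have Ex := rgw_head Rw; subst x.
have [G [P [E HG HP]]] := split_first1 w'; subst w'.
move: (Rw); rewrite /rgw /= rgw_cat => /andP [RG RP].
have Gbig c : c \in G -> 2 <= c.
  move=> Hc; have c0 : 0 < c by apply: (rgw_pos Rw); rewrite inE mem_cat Hc orbT.
  have : c != 1 by apply: contraNneq HG => <-.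
  lia.
pose g := map predn G.
have EM : foldl maxn 1 G = (nblocks g).+1 by rewrite foldl_maxnE nblocks_pred; lia.
pose p := map (fun y => if y <= 1 then y else y - nblocks g) P.
have EG : shift 1 g = G by rewrite /shift /g -map_comp map_id_in // => c /Gbig Hc /=; lia.
have EP : map (lift1 (nblocks g)) p = P.
  rewrite /p -map_comp map_id_in // => c /(nc_after_first_block Nw HG HP) /=.
  rewrite /lift1 EM; case=> [->|Hc] //.
  have E1 : (c <= 1) = false by apply/negbTE; rewrite -ltnNge; lia.
  have E2 : (c - nblocks g <= 1) = false by apply/negbTE; rewrite -ltnNge; lia.
  by rewrite E1 E2; lia.
exists g, p; split; last by rewrite /join_first EG EP.
- apply/ncP; split.
    rewrite /rgw -(rgw_shift 0 1 (_ : all _ g)) ?add0n ?EG //.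
    by apply/allP => c /mapP [d /Gbig Hd ->]; lia.
  move=> Cg; apply: Cw; apply: (cross_sub (u := G)).
    exact: subseq_trans (prefix_subseq _ _) (subseq_cons _ _).
  by rewrite -EG; exact: cross_map (shift_mono 1) Cg.
- apply/ncP; split.
    case: HP EP RP => [->|[r ->]]; case: p => // y p' /= [Ey Ep]; move: Ey.
    rewrite /lift1; case: ifP => Hy Ey; last by lia.
    have -> : y = 1 by lia.
    rewrite /rgw /= -(@rgw_lift 1 (nblocks g) p' isT) add1n -EM Ep.
    by rewrite EM (maxn_idPl _).
  move=> Cp; apply: Cw; apply: (cross_sub (u := P)).
    exact: subseq_trans (suffix_subseq _ _) (subseq_cons _ _).
  by rewrite -EP; exact: cross_map (lift1_mono _) Cp.
Qed.

Lemma first1_uniq (G P G' P' : seq nat) : G ++ P = G' ++ P' -> 1 \notin G -> 1 \notin G' ->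
  starts1 P -> starts1 P' -> G = G' /\ P = P'.
Proof.
move=> E HG HG' HP HP'.
have I0 Q : starts1 Q -> index 1 Q = 0 by case=> [->|[r ->]] //=; rewrite eqxx.
have Hs : size G = size G'.
  by have := congr1 (index 1) E; rewrite !index_cat (negbTE HG) (negbTE HG') !I0 // !addn0.
by move/eqP: E; rewrite eqseq_cat // => /andP [/eqP -> /eqP ->].
Qed.

Lemma join_first_inj g p g' p' : rgw g -> rgw p -> rgw g' -> rgw p' ->
  join_first g p = join_first g' p' -> g = g' /\ p = p'.
Proof.
move=> Rg Rp Rg' Rp' [E].
have n1 h : rgw h -> 1 \notin shift 1 h by move=> Rh; apply/negP => /(join_first_letters_g Rh).
have h1 h k : rgw h -> starts1 (map (lift1 k) h).
  case: h => [|y h] Rh; [by left|right].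
  by rewrite (rgw_head Rh); exists (map (lift1 k) h).
have [Eg Ep] := first1_uniq E (n1 _ Rg) (n1 _ Rg') (h1 _ _ Rp) (h1 _ _ Rp').
have {Eg} Eg : g = g' := inj_map (@addnI 1) Eg.
subst g'; split=> //; exact: (inj_map (mono_injn (lift1_mono (nblocks g))) Ep).
Qed.

(* An occurrence of 1[sigma] in 1[g]p, for sigma with equal first and last
   letters, lies in p (using the first 1 of p) or has its tail in the block
   1[g]: its tail is an occurrence of sigma, whose two ends are equal letters,
   and the letters of g and of the lifted p are disjoint. *)
Lemma join_first_contains_split g p sigma : rgw g -> rgw p -> rgw sigma ->
  0 < size sigma -> nth 0 sigma 0 = nth 0 sigma (size sigma).-1 ->
  contains (join_first g p) (1 :: shift 1 sigma) ->
  contains g sigma || contains p (1 :: shift 1 sigma).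
Proof.
move=> Rg Rp Rs Ss HLs /containsP [[|x t] Hs Ho]; first by have := oiso_size Ho.
have x0 : 0 < x.
  by apply: (rgw_pos (rgw_join_first Rg Rp)); apply: (mem_subseq Hs); rewrite inE eqxx.
have Ho1 := oiso_head1 x0 (above1_shift Rs) Ho.
move: (Ho); rewrite (oiso_min_head x t (above1_shift Rs)) => /andP [Ht /allP Hx].
have Ht' : oiso t sigma by move: Ht; rewrite oiso_mapr //; exact: shift_mono.
have HLt := oiso_head_last Ht' Ss HLs.
case: t Ho Ho1 Hs Hx Ht Ht' HLt => [|z t'] Ho Ho1 Hs Hx Ht Ht' HLt.
  by move: Ss; rewrite -(oiso_size Ht').
move: Hs; rewrite /join_first => /subseq_tl /subseq_catP [[|x2 t2] [t3 [E H2 H3]]].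
- rewrite /= in E; subst t3.
  case: p Rp H3 => [|y p''] Rp H3 //.
  have z1 : 1 < z by have := Hx 0 isT; rewrite /=; lia.
  have L1 : lift1 (nblocks g) 1 = 1 by [].
  have H4 : subseq (1 :: z :: t') (map (lift1 (nblocks g)) (1 :: p'')).
    by move: H3; rewrite (rgw_head Rp) /= L1 (gtn_eqF z1).
  have [s' Es Hs'] := subseq_map_inv H4.
  apply/orP; right; apply/containsP; exists s'; rewrite ?(rgw_head Rp) //.
  by rewrite -(oiso_mapl _ _ (lift1_mono (nblocks g))) -Es.
case/lastP: t3 E H3 => [|t3 zl] E H3.
- rewrite cats0 in E; rewrite -E in H2; have [s' Es Hs'] := subseq_map_inv H2.
  apply/orP; left; apply/containsP; exists s' => //.
  by move: Ht'; rewrite Es oiso_mapl //; exact: shift_mono.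
- exfalso; apply: (@join_first_disj g p x2 Rg Rp).
    by apply: (mem_subseq H2); rewrite inE eqxx.
  move: HLt; rewrite nth_last E -rcons_cat last_rcons /= => ->.
  by apply: (mem_subseq H3); rewrite mem_rcons inE eqxx.
Qed.

Lemma join_first_contains g p sigma : rgw g -> rgw p -> rgw sigma ->
  0 < size sigma -> nth 0 sigma 0 = nth 0 sigma (size sigma).-1 ->
  contains (join_first g p) (1 :: shift 1 sigma) =
  contains g sigma || contains p (1 :: shift 1 sigma).
Proof.
move=> Rg Rp Rs Ss HLs; apply/idP/idP; first exact: join_first_contains_split.
case/orP => /containsP [s Hs Ho]; apply/containsP.
- exists (1 :: shift 1 s).
    by rewrite /join_first /=; apply: subseq_trans (prefix_subseq _ _); exact: map_subseq.
  rewrite (oiso_min_head 1 _ (above1_shift Rs)) oiso_map ?Ho /=; try exact: shift_mono.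
  apply/allP => i; rewrite mem_iota /= add0n size_map => Hi; rewrite (nth_map 0) //.
  by have := rgw_pos Rg (mem_subseq Hs (mem_nth 0 Hi)); rewrite add1n ltnS.
- exists (map (lift1 (nblocks g)) s); last by rewrite oiso_mapl //; exact: lift1_mono.
  apply: subseq_trans (subseq_cons _ 1); rewrite /join_first.
  by apply: subseq_trans (suffix_subseq _ _); exact: map_subseq.
Qed.

(* A connected non-crossing partition ends with the letter 1: otherwise its
   factorization (g 1)[p] has p nonempty and disconnects it. *)
Lemma connected_head_last sigma : noncrossing sigma -> connected sigma -> sigma != [::] ->
  nth 0 sigma 0 = nth 0 sigma (size sigma).-1.
Proof.
move=> Ns Cs Hne; have [g [[|y p'] [Ng Np E]]] := join_last_surj Ns Hne.
- rewrite E /join_last /bracket /= cats0 size_rcons /= [in RHS]nth_rcons ltnn eqxx.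
  by case: g Ng {E} => [|z g'] // /nc_rgw /rgw_head ->.
- exfalso; apply: Cs; exists (rcons g 1), (y :: p'); split=> //.
  + exact: rgw_rcons1 (nc_rgw Ng).
  + exact: nc_rgw Np.
  + by case: (g).
Qed.

Lemma nc_av_first_rec sigma n : noncrossing sigma -> 0 < size sigma ->
  nth 0 sigma 0 = nth 0 sigma (size sigma).-1 ->
  nc_av n.+1 (1 :: shift 1 sigma) =
  sumn [seq nc_av m sigma * nc_av (n - m) (1 :: shift 1 sigma) | m <- iota 0 n.+1].
Proof.
move=> Ns Ss HL.
apply: (nc_av_convolution join_first_nc join_first_size join_first_surj).
  by move=> g p g' p' /nc_rgw Rg /nc_rgw Rp /nc_rgw Rg' /nc_rgw Rp'; apply: join_first_inj.
by move=> g p /nc_rgw Rg /nc_rgw Rp; apply: join_first_contains (nc_rgw Ns) Ss HL.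
Qed.

Lemma nc_av_last_rec rho n : noncrossing rho ->
  nc_av n.+1 (rcons (1 :: shift 1 rho) 1) =
  sumn [seq nc_av m (1 :: shift 1 rho) * nc_av (n - m) (rcons (1 :: shift 1 rho) 1)
       | m <- iota 0 n.+1].
Proof.
move=> Nr; apply: (nc_av_convolution join_last_nc join_last_size join_last_surj).
  by move=> g p g' p' _ /nc_rgw Rp _ /nc_rgw Rp'; apply: join_last_inj.
by move=> g p /nc_rgw Rg /nc_rgw Rp; apply: join_last_contains (above1_shift (nc_rgw Nr)).
Qed.

Theorem theorem3p8 (sigma rho : seq nat) :
  noncrossing sigma -> connected sigma -> noncrossing rho ->
  nc_equiv sigma (1 :: shift 1 rho) ->
  nc_equiv (1 :: shift 1 sigma) (rcons (1 :: shift 1 rho) 1).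
Proof.
move=> Ns Cs Nr Heq.
have Hne : sigma != [::] by case: (sigma) (Heq 0).
have HL := connected_head_last Ns Cs Hne.
have Ss : 0 < size sigma by rewrite lt0n size_eq0.
apply: (convolution_unique (c := fun m => nc_av m sigma)); first by [].
- by move=> n; exact: nc_av_first_rec.
- by move=> n; under eq_map => m do rewrite Heq; exact: nc_av_last_rec.
Qed.
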